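(* Let $\alpha_1\le\dots\le\alpha_r$ and $\beta_1\le\dots\le\beta_{r+1}$ be positive real numbers such that $\alpha_i\ge\beta_{i+1}$ for $i=1,\dots,r$ and $\sum_{i=1}^r\alpha_i=\sum_{i=1}^{r+1}\beta_i$. Then $\sum_{i=1}^{r+1}\beta_i^2\le\sum_{i=1}^r\alpha_i^2$, with equality if and only if $\alpha_i=\beta_{i+1}$ for all $i=1,\dots,r$. *)

From mathcomp Require Import all_boot all_order all_algebra.
From mathcomp Require Export reals.
Set Implicit Arguments. Unset Strict Implicit. Unset Printing Implicit Defensive.

From mathcomp Require Import all_boot all_order all_algebra.
From mathcomp Require Import reals.
From mathcomp Require Import ring lra.
Import Order.TTheory GRing.Theory Num.Theory.
Local Open Scope ring_scope.

(* Write c = β_1, b_i = β_{i+1} and a_i = α_i.  The sum condition says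
   c = Σ (a_i - b_i), which turns Σ a_i^2 - Σ b_i^2 - c^2 into
   Σ (a_i - b_i)(a_i + b_i - c).  Interlacing and c <= b_i make every term
   at least (a_i - b_i)^2, so the sum is nonnegative and vanishes exactly when
   a_i = b_i for all i. *)

Section InterlacingSquares.

Variable R : realDomainType.

Lemma interlacing_term_ge_sqr {x y c : R} :
  c <= y -> 0 <= y -> y <= x -> (x - y) ^+ 2 <= (x - y) * (x + y - c).
Proof. by move=> cy y0 yx; nra. Qed.

Lemma interlacing_term_eq0 {x y c : R} :
  c <= y -> 0 <= y -> y <= x -> (x - y) * (x + y - c) = 0 <-> x = y.
Proof.
move=> cy y0 yx; split=> [t0|->]; last by rewrite subrr mul0r.
have := interlacing_term_ge_sqr cy y0 yx; rewrite t0 => sqr_le0.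
by apply/eqP; rewrite -subr_eq0 -sqrf_eq0 eq_le sqr_le0 sqr_ge0.
Qed.

Variables (r : nat) (a b : 'I_r -> R) (c : R).
Hypothesis sum_ab : \sum_(i < r) a i = c + \sum_(i < r) b i.

Lemma sum_sqr_interlacing :
  \sum_(i < r) a i ^+ 2
  = c ^+ 2 + \sum_(i < r) b i ^+ 2 + \sum_(i < r) (a i - b i) * (a i + b i - c).
Proof.
have c_sum : c = \sum_(i < r) (a i - b i) by rewrite sumrB sum_ab addrK.
rewrite [in c ^+ 2]expr2 {2}c_sum mulr_sumr -addrA -!big_split /=.
by apply: eq_bigr => i _; ring.
Qed.

Hypotheses (c_le_b : forall i, c <= b i) (b_ge0 : forall i, 0 <= b i)
           (b_le_a : forall i, b i <= a i).

Lemma interlacing_term_ge0 i : 0 <= (a i - b i) * (a i + b i - c).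
Proof. exact: le_trans (sqr_ge0 _) (interlacing_term_ge_sqr (c_le_b i) (b_ge0 i) (b_le_a i)). Qed.

Lemma interlacing_sum_sqr_le :
  c ^+ 2 + \sum_(i < r) b i ^+ 2 <= \sum_(i < r) a i ^+ 2.
Proof.
by rewrite sum_sqr_interlacing lerDl sumr_ge0 // => i _; apply: interlacing_term_ge0.
Qed.

Lemma interlacing_sum_sqr_eq :
  c ^+ 2 + \sum_(i < r) b i ^+ 2 = \sum_(i < r) a i ^+ 2 <-> forall i, a i = b i.
Proof.
rewrite sum_sqr_interlacing; split=> [E i | ab].
- apply/(interlacing_term_eq0 (c_le_b i) (b_ge0 i) (b_le_a i)).
  apply: (@psumr_eq0P _ _ xpredT _ (fun i _ => interlacing_term_ge0 i)) => //.
  by apply: (addrI (c ^+ 2 + \sum_i b i ^+ 2)); rewrite addr0 -E.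
- rewrite [X in _ = _ + X]big1 ?addr0 // => i _.
  exact/(interlacing_term_eq0 (c_le_b i) (b_ge0 i) (b_le_a i)).
Qed.

End InterlacingSquares.

Theorem lemma2p5 (R : realType) (r : nat) (alpha : 'I_r -> R) (beta : 'I_r.+1 -> R)
  (alpha_pos : forall i, 0 < alpha i) (beta_pos : forall j, 0 < beta j)
  (alpha_mono : forall i j : 'I_r, (i <= j)%N -> alpha i <= alpha j)
  (beta_mono : forall i j : 'I_r.+1, (i <= j)%N -> beta i <= beta j)
  (interlace : forall i : 'I_r, beta (lift ord0 i) <= alpha i)
  (sum_eq : \sum_(i < r) alpha i = \sum_(j < r.+1) beta j) :
  \sum_(j < r.+1) beta j ^+ 2 <= \sum_(i < r) alpha i ^+ 2 /\
  (\sum_(j < r.+1) beta j ^+ 2 = \sum_(i < r) alpha i ^+ 2 <->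
     forall i : 'I_r, alpha i = beta (lift ord0 i)).
Proof.
rewrite big_ord_recl in sum_eq; rewrite big_ord_recl.
have beta0_le i : beta ord0 <= beta (lift ord0 i) by apply: beta_mono.
have beta_ge0 i : 0 <= beta (lift ord0 i) by apply: ltW.
split; first exact: interlacing_sum_sqr_le.
exact: interlacing_sum_sqr_eq.
Qed.
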